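(* Let $\Gamma$ be a countable discrete group and $\mu$ a symmetric, generating probability measure on $\Gamma$. Assume there is a nonzero $f\in\ell^\infty(\Gamma)$ with $f*\mu=-f$. Then there exists a multiplicative character $\chi:\Gamma\to\mathbb T$ with $\chi(h)=-1$ for all $h\in\operatorname{supp}(\mu)$, hence $\chi*\mu=-\chi$. Moreover, for every $F\in\ell^\infty(\Gamma)$ with $F*\mu=-F$ there exists $f_1\in\ell^\infty(\Gamma)$ with $f_1*\mu=f_1$ such that $F=f_1\cdot\chi$ (pointwise product).
   Context: $(f*\mu)(x)=\sum_{h\in\Gamma}\mu(h)f(xh)$. $\mu$ symmetric: $\mu(g)=\mu(g^{-1})$; generating: its support generates $\Gamma$ as a group. *)

From mathcomp Require Import ssreflect ssrfun ssrbool eqtype choice.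
From Stdlib Require Import Reals.
From Coquelicot Require Import Coquelicot.

Set Implicit Arguments.
Unset Strict Implicit.

Record is_group (G : Type) (mul : G -> G -> G) (inv : G -> G) (e : G) : Prop := {
  grp_assoc : forall x y z, mul x (mul y z) = mul (mul x y) z;
  grp_idl : forall x, mul e x = x;
  grp_idr : forall x, mul x e = x;
  grp_invl : forall x, mul (inv x) x = e;
  grp_invr : forall x, mul x (inv x) = e }.

Inductive gen_by (G : Type) (mul : G -> G -> G) (inv : G -> G) (e : G)
    (S : G -> Prop) : G -> Prop :=
  | gen_one : gen_by mul inv e S e
  | gen_in : forall x, S x -> gen_by mul inv e S x
  | gen_inv : forall x, gen_by mul inv e S x -> gen_by mul inv e S (inv x)
  | gen_mul : forall x y, gen_by mul inv e S x -> gen_by mul inv e S y ->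
                gen_by mul inv e S (mul x y).

(* Sequence enumerating a family indexed by a countable type G:
   the n-th term is a g if n is the code of g, and zero otherwise
   (pickle is injective, so each g appears exactly once). *)
Definition cnt_seq (G : countType) (V : AbelianGroup) (a : G -> V) : nat -> V :=
  fun n => match @pickle_inv G n with Some g => a g | None => zero end.

Definition sum_G (G : countType) (V : NormedModule R_AbsRing) (a : G -> V) (l : V) : Prop :=
  is_series (cnt_seq a) l.

Definition prob_measure (G : countType) (mu : G -> R) : Prop :=
  (forall g, 0 <= mu g)%R /\ sum_G mu 1%R.

Definition symmetric_measure (G : Type) (inv : G -> G) (mu : G -> R) : Prop :=
  forall g, mu g = mu (inv g).

Definition supp (G : Type) (mu : G -> R) : G -> Prop := fun h => mu h <> 0%R.

Definition generating (G : Type) (mul : G -> G -> G) (inv : G -> G) (e : G)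
    (mu : G -> R) : Prop :=
  forall g, gen_by mul inv e (supp mu) g.

Definition in_linfty (G : Type) (f : G -> C) : Prop :=
  exists M : R, forall x, (Cmod (f x) <= M)%R.

(* conv_eq mul mu f g  <->  f * mu = g, where
   (f * mu)(x) = \sum_{h in G} mu(h) f(x h). *)
Definition conv_eq (G : countType) (mul : G -> G -> G) (mu : G -> R)
    (f g : G -> C) : Prop :=
  forall x, sum_G (fun h => Cmult (RtoC (mu h)) (f (mul x h))) (g x).

Definition character (G : Type) (mul : G -> G -> G) (chi : G -> C) : Prop :=
  (forall g, Cmod (chi g) = 1%R) /\
  (forall g h, chi (mul g h) = Cmult (chi g) (chi h)).

(* Taking the real or imaginary part of f we obtain a bounded real u /= 0 with
   u * mu = -u; let s = sup |u| > 0.  If sg * u(x) is within d of s for a sign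
   sg, then for h in supp(mu) the equation u(x) = -sum_k mu(k) u(x k), whose
   terms are all bounded by s, forces -sg * u(x h) to be within d / mu(h) of s.
   Iterating along products, every g of the group generated by supp(mu)
   "transports" near-extremal values with a sign c(g) (predicate [transports]);
   approximate maximisers of |u| show that this sign is unique, and uniqueness
   makes c multiplicative with c = -1 on supp(mu).  Finally, for such a c,
   F * mu = Phi implies (F c) * mu = -(Phi c) ([conv_twist]), which gives both
   chi * mu = -chi (from 1 * mu = 1) and the factorisation F = (F chi) chi. *)

From mathcomp Require Import ssreflect ssrfun ssrbool eqtype choice.
From Stdlib Require Import Reals Lra ClassicalEpsilon.
From Coquelicot Require Import Coquelicot.

Set Implicit Arguments.
Unset Strict Implicit.

Lemma is_series_linear {K : AbsRing} {U V : NormedModule K} (phi : U -> V)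
    (a : nat -> U) (l : U) :
  is_linear phi -> is_series a l -> is_series (fun n => phi (a n)) (phi l).
Proof.
move=> Hphi Ha.
have partial : forall n, sum_n (fun k => phi (a k)) n = phi (sum_n a n).
  elim=> [|n IH]; first by rewrite !sum_O.
  by rewrite !sum_Sn IH (linear_plus _ Hphi).
apply: (filterlim_ext (fun n => phi (sum_n a n))); first by move=> n; rewrite partial.
apply: filterlim_comp Ha _; exact: linear_cont.
Qed.

Lemma sum_G_linear {G : countType} {U V : NormedModule R_AbsRing} (phi : U -> V)
    (a : G -> U) (l : U) :
  is_linear phi -> sum_G a l -> sum_G (fun g => phi (a g)) (phi l).
Proof.
move=> Hphi Ha.
apply: (is_series_ext (fun n => phi (cnt_seq a n))); last exact: is_series_linear.
move=> n; rewrite /cnt_seq; case: (pickle_inv n) => //; exact: linear_zero.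
Qed.

Lemma sum_G_ext {G : countType} {V : NormedModule R_AbsRing} {a b : G -> V} {l : V} :
  (forall g, a g = b g) -> sum_G a l -> sum_G b l.
Proof.
by move=> Eab; apply: is_series_ext => n; rewrite /cnt_seq; case: (pickle_inv n).
Qed.

Lemma sum_G_scal {G : countType} {V : NormedModule R_AbsRing} (c : R) (a : G -> V)
    (l : V) :
  sum_G a l -> sum_G (fun g => scal c (a g)) (scal c l).
Proof.
apply: (@sum_G_linear G V V (fun v : V => scal c v)).
apply: is_linear_scal_r => ? ?; exact: Rmult_comm.
Qed.
Arguments sum_G_scal {G V} c {a l}.

Lemma sum_G_plus {G : countType} {V : NormedModule R_AbsRing} {a b : G -> V}
    {la lb : V} :
  sum_G a la -> sum_G b lb -> sum_G (fun g => plus (a g) (b g)) (plus la lb).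
Proof.
move=> Ha Hb.
apply: (is_series_ext (fun n => plus (cnt_seq a n) (cnt_seq b n)));
  last exact: is_series_plus.
move=> n; rewrite /cnt_seq; case: (pickle_inv n) => //; exact: plus_zero_r.
Qed.

Lemma is_series_term_le (b : nat -> R) (l : R) :
  (forall n, 0 <= b n) -> is_series b l -> forall n, b n <= l.
Proof.
move=> Hb Hl n.
have incr : forall m, sum_n b m <= sum_n b (S m).
  by move=> m; rewrite sum_Sn /plus /=; have := Hb (S m); lra.
have partial_le : sum_n b n <= l by apply: (is_lim_seq_incr_compare (sum_n b)).
have term_le : b n <= sum_n b n.
  case: n {partial_le} => [|m]; first by rewrite sum_O; lra.
  have partial_pos : 0 <= sum_n b m.
    elim: m => [|m IH]; first by rewrite sum_O.
    by apply: Rle_trans (incr m).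
  by rewrite sum_Sn /plus /=; lra.
lra.
Qed.

Lemma sum_G_term_le {G : countType} {a : G -> R} {l : R} :
  (forall g, 0 <= a g) -> sum_G a l -> forall g, a g <= l.
Proof.
move=> Ha Hl g.
have := is_series_term_le _ Hl (pickle g); rewrite /cnt_seq pickleK_inv; apply.
by move=> n; case: (pickle_inv n) => [h|]; [exact: Ha | exact: Rle_refl].
Qed.

Section GroupIdentities.
Variables (G : Type) (mul : G -> G -> G) (inv : G -> G) (e : G).
Hypothesis Hgrp : is_group mul inv e.

Lemma inv_unique a b : mul a b = e -> b = inv a.
Proof.
move=> Hab.
by rewrite -(grp_idl Hgrp b) -(grp_invl Hgrp a) -(grp_assoc Hgrp) Hab (grp_idr Hgrp).
Qed.

Lemma inv_inv x : inv (inv x) = x.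
Proof. by symmetry; apply: inv_unique; exact: (grp_invl Hgrp). Qed.

Lemma inv_e : inv e = e.
Proof. by symmetry; apply: inv_unique; exact: (grp_idl Hgrp). Qed.

Lemma inv_mul x y : inv (mul x y) = mul (inv y) (inv x).
Proof.
symmetry; apply: inv_unique.
by rewrite (grp_assoc Hgrp) -(grp_assoc Hgrp x) (grp_invr Hgrp) (grp_idr Hgrp) (grp_invr Hgrp).
Qed.
End GroupIdentities.

Definition sign (c : R) : Prop := c = 1 \/ c = -1.

Lemma sign_mul a b : sign a -> sign b -> sign (a * b).
Proof. by case=> ->; case=> ->; [left|right|right|left]; ring. Qed.

Lemma sign_sq c : sign c -> c * c = 1.
Proof. by case=> ->; ring. Qed.

Lemma sign_abs c : sign c -> Rabs c = 1.
Proof. by case=> ->; rewrite ?Rabs_Ropp Rabs_R1. Qed.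

Lemma sign_of_abs r : exists sg, sign sg /\ sg * r = Rabs r.
Proof.
case: (Rle_lt_dec 0 r) => Hr.
- by exists 1; split; [left | rewrite Rabs_pos_eq; lra].
- by exists (-1); split; [right | rewrite Rabs_left; lra].
Qed.

Definition rconv_eq (G : countType) (mul : G -> G -> G) (mu : G -> R)
    (u v : G -> R) : Prop :=
  forall x, sum_G (fun h => mu h * u (mul x h)) (v x).

Lemma functional_rconv (G : countType) (mul : G -> G -> G) (mu : G -> R)
    (phi : C -> R) (f g : G -> C) :
  @is_linear R_AbsRing C_R_NormedModule R_NormedModule phi ->
  conv_eq mul mu f g -> rconv_eq mul mu (fun x => phi (f x)) (fun x => phi (g x)).
Proof.
move=> Hphi Hfg x.
apply: (sum_G_ext _ (sum_G_linear Hphi (Hfg x))) => h.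
by rewrite -scal_R_Cmult (linear_scal _ Hphi).
Qed.

Lemma im_le_Cmod (c : C) : Rabs (Im c) <= Cmod c.
Proof.
rewrite /Cmod -sqrt_Rsqr_abs; apply: sqrt_le_1_alt.
by rewrite /Rsqr /Im /=; nra.
Qed.

Lemma real_antiharmonic_part (G : countType) (mul : G -> G -> G) (mu : G -> R)
    (f : G -> C) (x0 : G) :
  in_linfty f -> f x0 <> RtoC 0 -> conv_eq mul mu f (fun x => Copp (f x)) ->
  exists u : G -> R, (exists M, forall x, Rabs (u x) <= M) /\ u x0 <> 0 /\
    rconv_eq mul mu u (fun x => - u x).
Proof.
move=> [M HM] Hx0 Hf.
case: (Req_dec (Re (f x0)) 0) => Hre.
- exists (fun x => Im (f x)); split; last split.
  + by exists M => x; apply: Rle_trans (im_le_Cmod _) (HM x).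
  + by move=> Him; apply: Hx0; apply: injective_projections.
  + exact: (functional_rconv (phi := fun z => Im z) is_linear_snd Hf).
- exists (fun x => Re (f x)); split; last split => //.
  + by exists M => x; apply: Rle_trans (re_le_Cmod _) (HM x).
  + exact: (functional_rconv (phi := fun z => Re z) is_linear_fst Hf).
Qed.

Lemma sup_abs (G : Type) (u : G -> R) (x0 : G) :
  (exists M, forall x, Rabs (u x) <= M) -> u x0 <> 0 ->
  exists s, 0 < s /\ (forall x, Rabs (u x) <= s) /\
    (forall d, 0 < d -> exists x, s - d < Rabs (u x)).
Proof.
move=> [M HM] Hx0.
have bounded : bound (fun r => exists x, r = Rabs (u x)).
  by exists M => r [x ->].
have [s [Hub Hleast]] := completeness _ bounded (ex_intro _ _ (ex_intro _ x0 erefl)).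
have Hle : forall x, Rabs (u x) <= s by move=> x; apply: Hub; exists x.
exists s; split; last split => //.
- by have := Hle x0; have := Rabs_pos_lt _ Hx0; lra.
- move=> d Hd; apply: not_all_not_ex => Hfar.
  suff : s <= s - d by lra.
  by apply: Hleast => r [x ->]; apply: Rnot_lt_le.
Qed.

Section SignCharacter.
Variables (G : countType) (mul : G -> G -> G) (inv : G -> G) (e : G).
Hypothesis Hgrp : is_group mul inv e.
Variable mu : G -> R.
Hypothesis Hprob : prob_measure mu.
Hypothesis Hsym : symmetric_measure inv mu.
Hypothesis Hgen : generating mul inv e mu.
Variables (u : G -> R) (s : R).
Hypothesis Hs : 0 < s.
Hypothesis Hbound : forall x, Rabs (u x) <= s.
Hypothesis Happrox : forall d, 0 < d -> exists x, s - d < Rabs (u x).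
Hypothesis Hconv : rconv_eq mul mu u (fun x => - u x).

Definition transports (g : G) (c : R) : Prop :=
  exists K, 0 < K /\ forall x sg d, sign sg -> s - d < sg * u x ->
    s - K * d < c * sg * u (mul x g).

Lemma transports_e : transports e 1.
Proof.
exists 1; split => [|x sg d _ Hx]; first lra.
rewrite (grp_idr Hgrp); lra.
Qed.

(* The key estimate: sum_k mu(k) (sg u(x k) + s) = s - sg u(x) < d has
   nonnegative terms, so the term at h in supp(mu) is below d. *)
Lemma transports_supp h : 0 < mu h -> transports h (-1).
Proof.
move=> Hh; exists (/ mu h); split; first exact: Rinv_0_lt_compat.
move=> x sg d Hsg Hx.
have shifted : sum_G (fun k => mu k * (sg * u (mul x k) + s)) (s - sg * u x).
  have Hsum := sum_G_plus (sum_G_scal sg (@Hconv x)) (sum_G_scal s (proj2 Hprob)).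
  have -> : s - sg * u x = plus (scal sg (- u x)) (scal s 1).
    by rewrite /plus /scal /= /mult /=; ring.
  by apply: (sum_G_ext _ Hsum) => k; rewrite /plus /scal /= /mult /=; ring.
have nonneg : forall y, 0 <= sg * u y + s.
  by move=> y; have := proj1 (Rabs_le_between _ _) (Hbound y); case: Hsg => ->; lra.
have term_h := sum_G_term_le (fun k => Rmult_le_pos _ _ (proj1 Hprob k) (nonneg _))
  shifted h.
have : sg * u (mul x h) + s < / mu h * d.
  apply: (Rmult_lt_reg_l (mu h)) => //.
  by rewrite -Rmult_assoc Rinv_r ?Rmult_1_l; lra.
lra.
Qed.

Lemma transports_mul g h c1 c2 :
  sign c1 -> transports g c1 -> transports h c2 -> transports (mul g h) (c1 * c2).
Proof.
move=> Hc1 [K1 [HK1 H1]] [K2 [HK2 H2]].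
exists (K2 * K1); split; first exact: Rmult_lt_0_compat.
move=> x sg d Hsg Hx.
have Hxg := H1 x sg d Hsg Hx.
have Hxgh := H2 (mul x g) (c1 * sg) (K1 * d) (sign_mul Hc1 Hsg) Hxg.
rewrite (grp_assoc Hgrp) [c1 * c2 * sg](_ : _ = c2 * (c1 * sg)); last by ring.
by rewrite Rmult_assoc.
Qed.

(* At an approximate maximiser x of |u|, transport with both signs would
   make c sg u(x g) and -c sg u(x g) both close to s > 0. *)
Lemma transports_not_both g c : transports g c -> transports g (- c) -> False.
Proof.
move=> [K [HK H]] [K' [HK' H']].
set d := s / (K + K').
have Hd : 0 < d by apply: Rdiv_lt_0_compat; lra.
have Hdd : K * d + K' * d = s by rewrite /d; field; lra.
have [x Hx] := Happrox Hd.
have [sg [Hsg Hsgx]] := sign_of_abs (u x).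
have := H x sg d Hsg ltac:(lra).
have := H' x sg d Hsg ltac:(lra).
lra.
Qed.

Lemma transports_unique g c c' :
  sign c -> sign c' -> transports g c -> transports g c' -> c = c'.
Proof.
move=> Hc Hc' Tc Tc'.
case: Hc Tc => -> Tc; case: Hc' Tc' => -> Tc' //; exfalso.
- exact: transports_not_both Tc Tc'.
- exact: transports_not_both Tc' Tc.
Qed.

(* Every element of the group, and its inverse, transports with a common
   sign: induction on the generation from supp(mu), which is symmetric. *)
Lemma transports_total g : exists c, sign c /\ transports g c /\ transports (inv g) c.
Proof.
elim: (Hgen g) => [|x Hx|x _ [c [Hc [T1 T2]]]|x y _ [c1 [Hc1 [T1 T2]]] _ [c2 [Hc2 [T3 T4]]]].
- by exists 1; rewrite (inv_e Hgrp); split; [left | split; exact: transports_e].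
- have Hmu : 0 < mu x by have := proj1 Hprob x; rewrite /supp in Hx; lra.
  exists (-1); split; first by right.
  by split; apply: transports_supp; rewrite // -Hsym.
- by exists c; rewrite (inv_inv Hgrp).
- exists (c1 * c2); split; first exact: sign_mul.
  split; first exact: transports_mul.
  by rewrite (inv_mul Hgrp) Rmult_comm; apply: transports_mul.
Qed.

Definition sign_char (g : G) : R :=
  if excluded_middle_informative (transports g 1) then 1 else -1.

Lemma sign_char_eq g c : sign c -> transports g c -> sign_char g = c.
Proof.
move=> Hc Tc; rewrite /sign_char; case: excluded_middle_informative => T1.
- exact: transports_unique (or_introl erefl) Hc T1 Tc.
- by case: Hc => Ec; rewrite // Ec in Tc.
Qed.

Lemma sign_char_sign g : sign (sign_char g).
Proof. by rewrite /sign_char; case: excluded_middle_informative; [left|right]. Qed.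

Lemma sign_char_mul g h : sign_char (mul g h) = sign_char g * sign_char h.
Proof.
have [c1 [Hc1 [T1 _]]] := transports_total g.
have [c2 [Hc2 [T2 _]]] := transports_total h.
rewrite (sign_char_eq Hc1 T1) (sign_char_eq Hc2 T2).
by apply: sign_char_eq; [exact: sign_mul | exact: transports_mul].
Qed.

Lemma sign_char_supp h : supp mu h -> sign_char h = -1.
Proof.
move=> Hh; apply: sign_char_eq; first by right.
by apply: transports_supp; have := proj1 Hprob h; rewrite /supp in Hh; lra.
Qed.
End SignCharacter.

Lemma exists_sign_character (G : countType) (mul : G -> G -> G) (inv : G -> G)
    (e : G) (mu : G -> R) (u : G -> R) (x0 : G) :
  is_group mul inv e -> prob_measure mu -> symmetric_measure inv mu ->
  generating mul inv e mu ->
  (exists M, forall x, Rabs (u x) <= M) -> u x0 <> 0 ->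
  rconv_eq mul mu u (fun x => - u x) ->
  exists c : G -> R, (forall g, sign (c g)) /\
    (forall g h, c (mul g h) = c g * c h) /\ (forall h, supp mu h -> c h = -1).
Proof.
move=> Hgrp Hprob Hsym Hgen Hbdd Hx0 Hu.
have [s [Hs [Hbound Happrox]]] := sup_abs Hbdd Hx0.
exists (sign_char mul u s); split; first exact: sign_char_sign.
split; first exact: (sign_char_mul Hgrp Hprob Hsym Hgen Hs Hbound Happrox Hu).
exact: (sign_char_supp Hprob Hs Hbound Happrox Hu).
Qed.

Lemma conv_eq_ext (G : countType) (mul : G -> G -> G) (mu : G -> R)
    (f f' g g' : G -> C) :
  (forall x, f x = f' x) -> (forall x, g x = g' x) ->
  conv_eq mul mu f g -> conv_eq mul mu f' g'.
Proof.
by move=> Ef Eg Hfg x; rewrite -Eg; apply: (sum_G_ext _ (Hfg x)) => h; rewrite Ef.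
Qed.

Lemma is_linear_RtoC :
  @is_linear R_AbsRing R_NormedModule C_R_NormedModule (fun r : R => RtoC r).
Proof.
apply: (is_linear_ext (fun r : R => scal r (RtoC 1))); last exact: is_linear_scal_l.
by move=> r; rewrite scal_R_Cmult Cmult_1_r.
Qed.

Lemma conv_const_one (G : countType) (mul : G -> G -> G) (mu : G -> R) :
  prob_measure mu -> conv_eq mul mu (fun _ => RtoC 1) (fun _ => RtoC 1).
Proof.
move=> [_ Hmu] x.
apply: (sum_G_ext _ (sum_G_linear is_linear_RtoC Hmu)) => h.
by rewrite Cmult_1_r.
Qed.

(* Twisting by a multiplicative c equal to -1 on supp(mu):
   since mu(h) c(x h) = -c(x) mu(h) for every h, F * mu = Phi implies
   (F c) * mu = -(Phi c). *)
Lemma conv_twist (G : countType) (mul : G -> G -> G) (mu : G -> R) (c : G -> R)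
    (F Phi : G -> C) :
  (forall g h, c (mul g h) = c g * c h) -> (forall h, supp mu h -> c h = -1) ->
  conv_eq mul mu F Phi ->
  conv_eq mul mu (fun x => Cmult (F x) (RtoC (c x)))
                 (fun x => Copp (Cmult (Phi x) (RtoC (c x)))).
Proof.
move=> Hmul Hsupp HF x.
have weight : forall h, mu h * c (mul x h) = - c x * mu h.
  move=> h; case: (Req_dec (mu h) 0) => Hh; first by rewrite Hh; ring.
  by rewrite Hmul (Hsupp h Hh); ring.
have Hsum := sum_G_scal (- c x) (HF x).
rewrite scal_R_Cmult RtoC_opp in Hsum.
have -> : Copp (Cmult (Phi x) (RtoC (c x))) = Cmult (Copp (RtoC (c x))) (Phi x) by ring.
apply: (sum_G_ext _ Hsum) => h.
have Eweight := f_equal RtoC (weight h); rewrite !RtoC_mult RtoC_opp in Eweight.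
have twisted_term : Cmult (RtoC (mu h)) (Cmult (F (mul x h)) (RtoC (c (mul x h))))
    = Cmult (Copp (RtoC (c x))) (Cmult (RtoC (mu h)) (F (mul x h))).
  transitivity (Cmult (F (mul x h)) (Cmult (RtoC (mu h)) (RtoC (c (mul x h))))); first ring.
  by rewrite Eweight; ring.
by rewrite scal_R_Cmult RtoC_opp twisted_term.
Qed.

Theorem theoremB (G : countType) (mul : G -> G -> G) (inv : G -> G) (e : G)
  (Hgrp : is_group mul inv e) (mu : G -> R)
  (Hprob : prob_measure mu) (Hsym : symmetric_measure inv mu)
  (Hgen : generating mul inv e mu) :
  (exists f : G -> C, in_linfty f /\ (exists x, f x <> RtoC 0%R) /\
     conv_eq mul mu f (fun x => Copp (f x))) ->
  exists chi : G -> C,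
    character mul chi /\
    (forall h, supp mu h -> chi h = Copp (RtoC 1%R)) /\
    conv_eq mul mu chi (fun x => Copp (chi x)) /\
    (forall F : G -> C, in_linfty F -> conv_eq mul mu F (fun x => Copp (F x)) ->
       exists f1 : G -> C, in_linfty f1 /\ conv_eq mul mu f1 f1 /\
         forall x, F x = Cmult (f1 x) (chi x)).
Proof.
move=> [f [Hf_bdd [[x0 Hx0] Hf]]].
have [u [Hu_bdd [Hu0 Hu]]] := real_antiharmonic_part Hf_bdd Hx0 Hf.
have [c [Hc_sign [Hc_mul Hc_supp]]] :=
  exists_sign_character Hgrp Hprob Hsym Hgen Hu_bdd Hu0 Hu.
exists (fun g => RtoC (c g)); split; last split; last split.
- split => [g | g h]; first by rewrite Cmod_R sign_abs.
  by rewrite Hc_mul RtoC_mult.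
- by move=> h Hh; rewrite Hc_supp // RtoC_opp.
- apply: (conv_eq_ext _ _ (conv_twist Hc_mul Hc_supp (conv_const_one mul Hprob))) => x;
    by rewrite Cmult_1_l.
- move=> F [MF HMF] HF; exists (fun x => Cmult (F x) (RtoC (c x))); split; last split.
  + by exists MF => x; rewrite Cmod_mult Cmod_R sign_abs // Rmult_1_r.
  + by apply: (conv_eq_ext _ _ (conv_twist Hc_mul Hc_supp HF)) => x //; ring.
  + by move=> x; rewrite -Cmult_assoc -RtoC_mult sign_sq // Cmult_1_r.
Qed.
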